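(* Let $A$ be an infinite alphabet and let $\tilde f:A^2\to\{0,1\}$ satisfy: (i) for each $x\in A$ there is $y\in A$ with $\tilde f(x,y)=1$; (ii) the set $\{x\in A: \tilde f(x,y)=1$ for infinitely many $y\in A\}$ is finite and non-empty. Let $f$ be the $1$-step shift map induced by $\tilde f$. Then the $1$-step shift space $X_f$ contains only finitely many elements of length $1$ (namely those $x\in A$ with $\tilde f(x,y)=1$ for infinitely many $y$), and $X_f$ is not conjugate to any $0$-step shift space (i.e. to any full shift $\Sigma_B$). In particular this applies to $\tilde f$ defined, for a fixed $x_0\in A$, by $\tilde f(x,y)=1$ if $x=x_0$, $\tilde f(x,y)=1$ if $x\ne x_0$ and $y=x$, and $\tilde f(x,y)=0$ otherwise.
   Context: For an alphabet $A$, $\Sigma_A$ is the set of infinite sequences over $A$ together with, when $A$ is infinite, all finite sequences (including the empty sequence $\emptyset$); for finite $A$ it is just the infinite sequences. The topology is generated by the generalized cylinders $Z(x,F)=\{y: y_i=x_i\ (1\le i\le k),\ y_{k+1}\notin F\}$ ($x=(x_1,\dots,x_k)\ne\emptyset$, $F\subseteq A$ finite) and $Z(\emptyset,F)=\{y: y_1\notin F\}$; $l(x)$ denotes length ($\infty$ for infinite sequences); $\sigma$ deletes the first letter. A subblock of $x$ is a finite word $u$ with $x=vuz$. For $f:\bigcup_{k\ge1}A^k\to\{0,1\}$: $X_f^{inf}=\{x\in A^{\mathbb N}: f(u)=1$ for all nonempty subblocks $u$ of $x\}$, $X_f^{fin}=\{x$ finite: there are infinitely many $a\in A$ with $xay\in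 X_f^{inf}$ for some infinite $y\}$, $X_f=X_f^{inf}\cup X_f^{fin}$. For $N\ge0$ and $\tilde f:A^{N+1}\to\{0,1\}$ the $N$-step shift map induced by $\tilde f$ is $f(x)=1$ if $|x|\le N$ and $f(x)=\prod_{i=1}^{|x|-N}\tilde f(x_i,\dots,x_{N+i})$ if $|x|\ge N+1$; $N$-step shift spaces are the sets $X_g$ for such induced maps $g$ (over some alphabet $B$). A conjugacy is a continuous, shift-commuting bijection between shift spaces preserving length $l$. *)

From Stdlib Require Import List Arith.
Import ListNotations.
Set Implicit Arguments.

(* Elements of Sigma_A: finite words (including the empty sequence) or
   infinite sequences (0-indexed: position i of the paper is index i-1). *)
Inductive seqA (A : Type) : Type :=
| Fin : list A -> seqA A
| Inf : (nat -> A) -> seqA A.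
Arguments Fin {A} _.
Arguments Inf {A} _.

Definition len {A} (x : seqA A) : option nat :=
  match x with Fin l => Some (length l) | Inf _ => None end.

Definition letter {A} (x : seqA A) (i : nat) : option A :=
  match x with Fin l => nth_error l i | Inf s => Some (s i) end.

Definition shift {A} (x : seqA A) : seqA A :=
  match x with Fin l => Fin (tl l) | Inf s => Inf (fun n => s (S n)) end.

Definition prepend {A} (w : list A) (s : nat -> A) : nat -> A :=
  fun n => if n <? length w then nth n w (s 0) else s (n - length w).

(* generalized cylinder Z(x,F): x finite word (possibly empty), F finite set *)
Definition cyl (A : Type) : Type := (list A * list A)%type.

(* y in Z(x,F): y begins with x, and it is not the case that y has a
   (l(x)+1)-th letter lying in F. (So x itself belongs to Z(x,F).) *)
Definition in_cyl {A} (c : cyl A) (y : seqA A) : Prop :=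
  let (x, F) := c in
  (forall i, i < length x -> letter y i = nth_error x i) /\
  ~ (exists a, letter y (length x) = Some a /\ In a F).

(* open sets of the topology generated by the generalized cylinders:
   unions of finite intersections of cylinders *)
Definition is_open {A} (O : seqA A -> Prop) : Prop :=
  forall y, O y -> exists Ls : list (cyl A),
    (forall c, In c Ls -> in_cyl c y) /\
    (forall z, (forall c, In c Ls -> in_cyl c z) -> O z).

Definition rel_open {A} (X U : seqA A -> Prop) : Prop :=
  exists O, is_open O /\ forall x, X x -> (U x <-> O x).

Definition continuous_on {A B} (X : seqA A -> Prop) (Y : seqA B -> Prop)
  (phi : seqA A -> seqA B) : Prop :=
  forall U, rel_open Y U -> rel_open X (fun x => U (phi x)).

Definition conjugate {A B} (X : seqA A -> Prop) (Y : seqA B -> Prop) : Prop :=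
  exists phi : seqA A -> seqA B,
    (forall x, X x -> Y (phi x)) /\
    (forall x x', X x -> X x' -> phi x = phi x' -> x = x') /\
    (forall y, Y y -> exists x, X x /\ phi x = y) /\
    continuous_on X Y phi /\
    (forall x, X x -> phi (shift x) = shift (phi x)) /\
    (forall x, X x -> len (phi x) = len x).

(* N-step shift map induced by ft : A^{N+1} -> {0,1}; ft is given on lists and
   only its values on lists of length N+1 are used. *)
Definition induced {A} (N : nat) (ft : list A -> bool) (w : list A) : bool :=
  if length w <=? N then true
  else forallb (fun i => ft (firstn (S N) (skipn i w))) (seq 0 (length w - N)).

Definition subblock {A} (s : nat -> A) (i n : nat) : list A :=
  map (fun j => s (i + j)) (seq 0 n).

Definition Xinf {A} (f : list A -> bool) (s : nat -> A) : Prop :=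
  forall i n, 0 < n -> f (subblock s i n) = true.

Definition infinitely_many {A} (P : A -> Prop) : Prop :=
  forall l : list A, exists a, ~ In a l /\ P a.

Definition Xfin {A} (f : list A -> bool) (x : list A) : Prop :=
  infinitely_many (fun a => exists y : nat -> A, Xinf f (prepend (x ++ [a]) y)).

Definition Xf {A} (f : list A -> bool) (x : seqA A) : Prop :=
  match x with Fin l => Xfin f l | Inf s => Xinf f s end.

Definition ft2 {A} (ft : A -> A -> bool) (w : list A) : bool :=
  match w with [a; b] => ft a b | _ => false end.
Definition ft1 {A} (g : A -> bool) (w : list A) : bool :=
  match w with [a] => g a | _ => false end.

Definition infinite_type (A : Type) : Prop :=
  forall l : list A, exists a, ~ In a l.

Definition conclusion {A} (ft : A -> A -> bool) : Prop :=
  let X := Xf (induced 1 (ft2 ft)) in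
  (forall a, X (Fin [a]) <-> infinitely_many (fun y => ft a y = true)) /\
  (exists l : list (seqA A), forall w, X w -> len w = Some 1 -> In w l) /\
  (forall (B : Type) (g : B -> bool), ~ conjugate X (Xf (induced 0 (ft1 g)))).

(* A 0-step shift space is a full shift Sigma_B' with B' = {b : g b}; it has
   either no point of length one or infinitely many, since a one-letter word
   [b] survives exactly when b is allowed and infinitely many letters may follow
   it. For the 1-step space X_f, totality of ft lets every allowed pair be
   extended to an infinite path, so [a] is a point of X_f exactly when ft a y
   holds for infinitely many y: finitely many points of length one, but at least
   one. A conjugacy preserves length and is bijective, so it would carry this
   finite non-empty set onto the length-one points of a full shift. *)

From Stdlib Require Import List Arith Lia IndefiniteDescription Classical.
Import ListNotations.

Lemma subblock_S {A} (s : nat -> A) i n :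
  subblock s i (S n) = s i :: subblock s (S i) n.
Proof.
  unfold subblock; cbn; rewrite <- seq_shift, map_map, Nat.add_0_r.
  f_equal; apply map_ext; intros; f_equal; lia.
Qed.

Lemma length_subblock {A} (s : nat -> A) i n : length (subblock s i n) = n.
Proof. unfold subblock; rewrite length_map, length_seq; reflexivity. Qed.

Lemma skipn_subblock {A} (s : nat -> A) k i n :
  skipn k (subblock s i n) = subblock s (i + k) (n - k).
Proof.
  revert i n; induction k as [|k IHk]; intros i n.
  - rewrite Nat.add_0_r, Nat.sub_0_r; reflexivity.
  - destruct n as [|n]; [reflexivity|].
    rewrite subblock_S, <- Nat.add_succ_comm; exact (IHk (S i) n).
Qed.

Lemma firstn_subblock {A} (s : nat -> A) m i n :
  firstn m (subblock s i n) = subblock s i (min m n).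
Proof.
  revert i n; induction m as [|m IHm]; intros i n; [reflexivity|].
  destruct n as [|n]; [reflexivity|].
  rewrite !subblock_S; simpl; rewrite subblock_S, IHm; reflexivity.
Qed.

Lemma Xinf_induced {A} (N : nat) (ft : list A -> bool) (s : nat -> A) :
  Xinf (induced N ft) s <-> forall i, ft (subblock s i (S N)) = true.
Proof.
  split.
  - intros Hs i; specialize (Hs i (S N) (Nat.lt_0_succ N)).
    unfold induced in Hs; rewrite length_subblock, Nat.sub_succ_l, Nat.sub_diag in Hs by lia.
    rewrite (proj2 (Nat.leb_gt (S N) N)) in Hs by lia.
    cbn [seq forallb skipn] in Hs.
    now rewrite firstn_subblock, Nat.min_id, Bool.andb_true_r in Hs.
  - intros Hwin i n _; unfold induced; rewrite length_subblock.
    destruct (Nat.leb_spec n N) as [_|HNn]; [reflexivity|].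
    apply forallb_forall; intros k Hk; apply in_seq in Hk.
    rewrite skipn_subblock, firstn_subblock.
    replace (min (S N) (n - k)) with (S N) by lia; apply Hwin.
Qed.

Lemma Xinf_step1 {A} (ft : A -> A -> bool) (s : nat -> A) :
  Xinf (induced 1 (ft2 ft)) s <-> forall i, ft (s i) (s (S i)) = true.
Proof.
  rewrite Xinf_induced; unfold subblock; cbn.
  split; intros H i; specialize (H i); now rewrite Nat.add_0_r, Nat.add_1_r in *.
Qed.

Lemma Xinf_step0 {B} (g : B -> bool) (s : nat -> B) :
  Xinf (induced 0 (ft1 g)) s <-> forall i, g (s i) = true.
Proof.
  rewrite Xinf_induced; unfold subblock; cbn.
  split; intros H i; specialize (H i); now rewrite Nat.add_0_r in *.
Qed.

Lemma prepend_pair {A} (a b : A) (y : nat -> A) (n : nat) :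
  prepend [a; b] y n = match n with 0 => a | 1 => b | S (S k) => y k end.
Proof. destruct n as [|[|k]]; cbn; [reflexivity.. | now rewrite Nat.sub_0_r]. Qed.

Lemma total_path_from {A} {ft : A -> A -> bool} :
  (forall x, exists y, ft x y = true) ->
  forall a, exists s : nat -> A, s 0 = a /\ forall i, ft (s i) (s (S i)) = true.
Proof.
  intros Htot a.
  destruct (functional_choice _ Htot) as [next Hnext].
  exists (fun n => Nat.iter n next a); split; [reflexivity|].
  intro i; apply Hnext.
Qed.

Lemma Xf_step1_singleton {A} {ft : A -> A -> bool} :
  (forall x, exists y, ft x y = true) ->
  forall a, Xf (induced 1 (ft2 ft)) (Fin [a]) <-> infinitely_many (fun y => ft a y = true).
Proof.
  intros Htot a; cbn; split; intros H l; destruct (H l) as [b [Hbl Hb]];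
    exists b; split; auto.
  - destruct Hb as [y Hy]; exact (proj1 (Xinf_step1 _ _) Hy 0).
  - destruct (total_path_from Htot b) as [s [Hs0 Hs]].
    exists (fun n => s (S n)); apply Xinf_step1; cbn [app].
    intros [|[|i]]; rewrite !prepend_pair; [exact Hb | rewrite <- Hs0 |]; apply Hs.
Qed.

Lemma Xf_step0_singleton {B} (g : B -> bool) (b : B) :
  Xf (induced 0 (ft1 g)) (Fin [b]) <-> g b = true /\ infinitely_many (fun c => g c = true).
Proof.
  cbn; split.
  - intro H; split.
    + destruct (H []) as [c [_ [y Hy]]].
      exact (proj1 (Xinf_step0 _ _) Hy 0).
    + intro l; destruct (H l) as [c [Hcl [y Hy]]]; exists c; split; auto.
      exact (proj1 (Xinf_step0 _ _) Hy 1).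
  - intros [Hb Hinf] l; destruct (Hinf l) as [c [Hcl Hc]]; exists c; split; auto.
    exists (fun _ => c); apply Xinf_step0; cbn [app]; intro i; rewrite prepend_pair.
    now destruct i as [|[|]].
Qed.

Definition finitely_many_of_len {A} (X : seqA A -> Prop) (n : nat) : Prop :=
  exists l : list (seqA A), forall w, X w -> len w = Some n -> In w l.

Lemma full_shift_len1_infinite {B} {g : B -> bool} {b : B} :
  Xf (induced 0 (ft1 g)) (Fin [b]) -> ~ finitely_many_of_len (Xf (induced 0 (ft1 g))) 1.
Proof.
  intros Hb [l Hl].
  destruct (proj1 (Xf_step0_singleton g b) Hb) as [_ Hinf].
  set (letters := flat_map (fun w => match w with Fin u => u | Inf _ => [] end) l).
  destruct (Hinf letters) as [c [Hc Hgc]].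
  apply Hc, in_flat_map; exists (Fin [c]); split; [|now left].
  apply Hl; [apply Xf_step0_singleton; split; auto | reflexivity].
Qed.

Lemma conjugate_finitely_many_of_len {A B} {X : seqA A -> Prop} {Y : seqA B -> Prop} {n : nat} :
  conjugate X Y -> finitely_many_of_len X n -> finitely_many_of_len Y n.
Proof.
  intros [phi [_ [_ [Hsurj [_ [_ Hlen]]]]]] [l Hl].
  exists (map phi l); intros y Hy Hyn.
  destruct (Hsurj y Hy) as [x [Hx <-]].
  apply in_map, Hl; [exact Hx | now rewrite <- Hlen].
Qed.

Lemma conjugate_image_len {A B} {X : seqA A -> Prop} {Y : seqA B -> Prop} {x : seqA A} :
  conjugate X Y -> X x -> exists y, Y y /\ len y = len x.
Proof. intros [phi [Hmap [_ [_ [_ [_ Hlen]]]]]] Hx; exists (phi x); auto. Qed.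

Lemma conclusion_of_finitely_many_branching_letters {A} (ft : A -> A -> bool) :
  (forall x, exists y, ft x y = true) ->
  (exists l : list A, forall x, infinitely_many (fun y => ft x y = true) -> In x l) ->
  (exists x, infinitely_many (fun y => ft x y = true)) ->
  conclusion ft.
Proof.
  intros Htot [l Hl] [x0 Hx0].
  set (X := Xf (induced 1 (ft2 ft))).
  assert (Hfin : finitely_many_of_len X 1).
  { exists (map (fun a => Fin [a]) l); intros [[|a [|]]|] Hw Hlen; try discriminate.
    apply (in_map (fun a => Fin [a])), Hl, (Xf_step1_singleton Htot), Hw. }
  split; [exact (Xf_step1_singleton Htot)|]; split; [exact Hfin|].
  intros B g Hconj.
  assert (HX0 : X (Fin [x0])) by now apply Xf_step1_singleton.
  destruct (conjugate_image_len Hconj HX0) as [[[|b [|]]|] [HY0 Hlen0]]; try discriminate.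
  exact (full_shift_len1_infinite HY0 (conjugate_finitely_many_of_len Hconj Hfin)).
Qed.

Theorem mainTheorem4 (A : Type) (HA : infinite_type A) :
  (forall ft : A -> A -> bool,
      (forall x, exists y, ft x y = true) ->
      (exists l : list A, forall x,
          infinitely_many (fun y => ft x y = true) -> In x l) ->
      (exists x, infinitely_many (fun y => ft x y = true)) ->
      conclusion ft) /\
  (forall (x0 : A) (ft : A -> A -> bool),
      (forall x y, ft x y = true <-> (x = x0 \/ (x <> x0 /\ y = x))) ->
      conclusion ft).
Proof.
  split; [intro ft; apply conclusion_of_finitely_many_branching_letters|].
  intros x0 ft Hft; apply conclusion_of_finitely_many_branching_letters.
  - intro x; exists x; apply Hft; destruct (classic (x = x0)); auto.
  - exists [x0]; intros x Hx; destruct (classic (x = x0)) as [->|Hne]; [now left|].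
    destruct (Hx [x]) as [y [Hy Hxy]]; apply Hft in Hxy.
    destruct Hxy as [|[_ ->]]; [contradiction | now destruct Hy; left].
  - exists x0; intro l; destruct (HA l) as [a Ha]; exists a; split; auto.
    now apply Hft; left.
Qed.
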